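(* Let $R$ be a blind bisimulation on the nodes of a $\lambda$-graph $G$ and let $Q$ be a binary relation with $Q\subseteq R$. Let $n,m$ be nodes with $n\,Q\,m$, and $\tau$ a trace such that the path $n\xrightarrow{\tau}$ crosses an abstraction node $l$ and the path $m\xrightarrow{\tau}$ crosses an abstraction node $l'$. If $l\,R\,l'$ then $l\,Q^{\Downarrow}\,l'$.
   Context: A pre-$\lambda$-graph is a directed graph whose nodes are of four kinds: an application node $@(n_1,n_2)$ has exactly two children, its left child $n_1$ and its right child $n_2$; an abstraction node $\lambda(n)$ has exactly one child, its body $n$; a free variable node has no children and carries an atom $\mathrm{id}(n)$ from a fixed set of atoms, distinct free variable nodes carrying distinct atoms; a bound variable node $\mathrm{var}(l)$ has exactly one outgoing binding edge, to an abstraction node $l$ (its binder). A trace is a finite sequence of directions from $\{\swarrow,\downarrow,\searrow\}$; $\epsilon$ is the empty trace and $d\cdot\tau$ is the trace $\tau$ extended by one final step $d$. Paths $n\xrightarrow{\tau}m$ are defined inductively: $n\xrightarrow{\epsilon}n$; if $n\xrightarrow{\tau}\lambda(m)$ then $n\xrightarrow{\downarrow\cdot\tau}m$; if $n\xrightarrow{\tau}@(m_1,m_2)$ then $n\xrightarrow{\swarrow\cdot\tau}m_1$ and $n\xrightarrow{\searrow\cdot\tau}m_2$ (binding edges are never followed). We write $n\xrightarrow{\tau}$ if $n\xrightarrow{\tau}m$ for some $m$. The path $n\xrightarrow{\tau}$ crosses a node $m$ if either $n\xrightarrow{\tau}m$, or $\tau=d\cdot\tau'$ and $n\xrightarrow{\tau'}$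 crosses $m$. A root is a node $r$ such that the only path ending in $r$ has the empty trace. A node $m$ dominates $n$ if every path from a root to $n$ crosses $m$. A $\lambda$-graph is a pre-$\lambda$-graph that has finitely many nodes, is acyclic ($n\xrightarrow{\tau}n$ holds only for $\tau=\epsilon$), and is dominated (every bound variable node $\mathrm{var}(l)$ is dominated by its binder $l$). Two nodes are homogeneous if both are application nodes, or both abstraction nodes, or both free variable nodes, or both bound variable nodes; a binary relation $R$ on nodes is homogeneous if it only relates homogeneous nodes. Rules: $(\swarrow)$: $@(n_1,n_2)\,R\,@(m_1,m_2)$ implies $n_1\,R\,m_1$; $(\searrow)$: $@(n_1,n_2)\,R\,@(m_1,m_2)$ implies $n_2\,R\,m_2$; $(\downarrow)$: $\lambda(n)\,R\,\lambda(m)$ implies $n\,R\,m$. $R$ is propagated if closed under $(\swarrow),(\downarrow),(\searrow)$. A blind bisimulation is a homogeneous propagated relation. $R^{\Downarrow}$ (propagation) is the smallest propagated relation containing $R$. *)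

From Stdlib Require Import List.
Import ListNotations.
Set Implicit Arguments.

(* The kind of a node together with its outgoing edges. A = the fixed set of atoms. *)
Inductive node (A V : Type) : Type :=
| App (n1 n2 : V)
| Abs (b : V)
| FV (a : A)
| BV (l : V).       (* bound variable var(l), binding edge to l *)
Arguments App {A V}. Arguments Abs {A V}. Arguments FV {A V}. Arguments BV {A V}.

(* Directions: swarrow, downarrow, searrow *)
Inductive dir : Type := DL | DD | DR.

(* Traces: [d :: t] is the trace t extended by ONE FINAL step d (i.e. d . t). *)
Definition trace := list dir.

Section LG.
Context {A V : Type} (g : V -> node A V).

Definition is_abs (l : V) : Prop := exists b, g l = Abs b.

Definition pre_lambda_graph : Prop :=
  (forall n l, g n = BV l -> is_abs l) /\
  (forall n1 n2 a, g n1 = FV a -> g n2 = FV a -> n1 = n2).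

(* paths n --t--> m (binding edges never followed) *)
Inductive path : V -> trace -> V -> Prop :=
| path_nil n : path n [] n
| path_down n t m b : path n t m -> g m = Abs b -> path n (DD :: t) b
| path_left n t m m1 m2 : path n t m -> g m = App m1 m2 -> path n (DL :: t) m1
| path_right n t m m1 m2 : path n t m -> g m = App m1 m2 -> path n (DR :: t) m2.

Inductive crosses : V -> trace -> V -> Prop :=
| crosses_end n t m : path n t m -> crosses n t m
| crosses_prefix n d t m : crosses n t m -> crosses n (d :: t) m.

Definition is_root (r : V) : Prop := forall n t, path n t r -> t = [].

Definition dominates (m n : V) : Prop :=
  forall r t, is_root r -> path r t n -> crosses r t m.

Definition finite_nodes : Prop := exists s : list V, forall v, In v s.

Definition acyclic : Prop := forall n t, path n t n -> t = [].

Definition dominated : Prop := forall n l, g n = BV l -> dominates l n.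

Definition lambda_graph : Prop :=
  pre_lambda_graph /\ finite_nodes /\ acyclic /\ dominated.

Definition homogeneous_nodes (x y : V) : Prop :=
  match g x, g y with
  | App _ _, App _ _ | Abs _, Abs _ | FV _, FV _ | BV _, BV _ => True
  | _, _ => False
  end.

Definition homogeneous (R : V -> V -> Prop) : Prop :=
  forall x y, R x y -> homogeneous_nodes x y.

Definition propagated (R : V -> V -> Prop) : Prop :=
  (forall x y x1 x2 y1 y2, R x y -> g x = App x1 x2 -> g y = App y1 y2 -> R x1 y1) /\
  (forall x y x1 x2 y1 y2, R x y -> g x = App x1 x2 -> g y = App y1 y2 -> R x2 y2) /\
  (forall x y bx b_y, R x y -> g x = Abs bx -> g y = Abs b_y -> R bx b_y).

Definition blind_bisimulation (R : V -> V -> Prop) : Prop :=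
  homogeneous R /\ propagated R.

(* Q^{Downarrow}: the smallest propagated relation containing Q *)
Inductive propagation (Q : V -> V -> Prop) : V -> V -> Prop :=
| prop_base x y : Q x y -> propagation Q x y
| prop_left x y x1 x2 y1 y2 : propagation Q x y -> g x = App x1 x2 -> g y = App y1 y2 ->
    propagation Q x1 y1
| prop_right x y x1 x2 y1 y2 : propagation Q x y -> g x = App x1 x2 -> g y = App y1 y2 ->
    propagation Q x2 y2
| prop_down x y bx b_y : propagation Q x y -> g x = Abs bx -> g y = Abs b_y ->
    propagation Q bx b_y.

End LG.

From Stdlib Require Import List Lia.
Import ListNotations.

(* Write the crossing points as n --s1--> l and m --s2--> l',
   with s1 and s2 suffixes of the common trace t.  If s1 = s2, the two paths
   run in parallel from the Q-related pair (n, m), so every pair of nodes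
   they reach simultaneously lies in Q^{Downarrow}; in particular l Q^{Downarrow} l'.
   Otherwise one crossing is strictly deeper, say s2 = q ++ s1 with q <> [].
   Let y be the node reached by m --s1-->; then l R y (Q^{Downarrow} is
   contained in R) and y --q--> l'.  Since R is a blind bisimulation, a node
   R-related to both y and l' forces every trace from y to be followable from
   l'; iterating the non-empty trace q gives arbitrarily long paths from y,
   which is impossible in a finite acyclic graph (a path never repeats a
   node, hence is shorter than the node list). *)

Lemma suffix_trichotomy {X : Type} (p1 : list X) : forall p2 s1 s2, p1 ++ s1 = p2 ++ s2 ->
  s1 = s2 \/ (exists q, q <> [] /\ s2 = q ++ s1) \/ (exists q, q <> [] /\ s1 = q ++ s2).
Proof.
  induction p1 as [|x p1 IH]; intros [|y p2] s1 s2 H; simpl in *; auto.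
  - right; right; exists (y :: p2); split; [discriminate | exact H].
  - right; left; exists (x :: p1); split; [discriminate | now symmetry].
  - injection H as _ H; eauto.
Qed.

Section LambdaGraphPaths.
Context {A V : Type} {g : V -> node A V}.

Lemma path_det {n t k1} : path g n t k1 -> forall {k2}, path g n t k2 -> k1 = k2.
Proof.
  induction 1; intros k2 H2; inversion H2; subst;
    try match goal with
        | IH : forall k, path g ?n ?t k -> _ = k, Hp : path g ?n ?t ?z |- _ =>
            specialize (IH _ Hp); subst
        end; congruence.
Qed.

(* Concatenation of paths: the trace w ++ s first follows s, then w. *)
Lemma path_app {b w c} : path g b w c -> forall {a s}, path g a s b -> path g a (w ++ s) c.
Proof. induction 1; intros a s Hs; simpl; auto; econstructor; eauto. Qed.

Lemma path_split (p : trace) {s a b} : path g a (p ++ s) b -> exists c, path g a s c /\ path g c p b.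
Proof.
  revert s a b; induction p as [|d p IH]; intros s a b H; simpl in *.
  - exists b; split; [exact H | constructor].
  - inversion H; subst;
      match goal with Hp : path g a (p ++ s) ?z |- _ =>
        destruct (IH _ _ _ Hp) as [c [H1 H2]] end;
      exists c; split; auto; econstructor; eauto.
Qed.

Lemma crosses_suffix {n t l} : crosses g n t l -> exists p s, t = p ++ s /\ path g n s l.
Proof.
  induction 1 as [n t m Hp | n d t m _ [p [s [-> Hs]]]].
  - exists [], t; auto.
  - exists (d :: p), s; auto.
Qed.

(* In an acyclic graph the endpoint of a path is crossed exactly once, so a path
   of length k crosses k + 1 distinct nodes. *)
Lemma path_crosses_distinct :
  acyclic g -> forall {t n m}, path g n t m ->
  exists vs, NoDup vs /\ length vs = S (length t) /\ forall v, In v vs -> crosses g n t v.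
Proof.
  intros Hac t. induction t as [|d t IH]; intros n m' Hp.
  - exists [n]; repeat split; [repeat constructor; easy |].
    intros v [<- | []]; apply crosses_end, path_nil.
  - destruct (path_split [d] Hp) as [m [Hm Hstep]].
    destruct (IH _ _ Hm) as [vs [Hnd [Hlen Hvs]]].
    assert (Hfresh : ~ In m' vs).
    { intros Hin. destruct (crosses_suffix (Hvs _ Hin)) as [p [s [-> Hs]]].
      destruct (path_split p Hm) as [c [Hc Hcm]].
      rewrite (path_det Hc Hs) in Hcm.
      discriminate (Hac _ _ (path_app Hstep Hcm)). }
    exists (m' :: vs); repeat split; [now constructor | simpl; lia |].
    intros v [<- | Hv]; [now constructor | exact (crosses_prefix d (Hvs _ Hv))].
Qed.

Lemma path_length_bound :
  @finite_nodes V -> acyclic g -> exists B, forall v w u, path g v w u -> length w < B.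
Proof.
  intros [nodes Hall] Hac. exists (length nodes). intros v w u Hp.
  destruct (path_crosses_distinct Hac Hp) as [vs [Hnd [Hlen _]]].
  assert (Hincl : length vs <= length nodes)
    by (apply NoDup_incl_length; [exact Hnd | intros x _; apply Hall]).
  lia.
Qed.

Lemma bisim_transfer {R} : blind_bisimulation g R ->
  forall {a w a'}, path g a w a' -> forall {b}, R a b -> exists b', path g b w b' /\ R a' b'.
Proof.
  intros [Hhom [Hleft [Hright Hdown]]].
  induction 1 as [a | a w x bx Hp IH Hg | a w x x1 x2 Hp IH Hg | a w x x1 x2 Hp IH Hg];
    intros b Hab; [now exists b; split; [constructor | ] | ..];
    destruct (IH _ Hab) as [y [Hy Hxy]];
    pose proof (Hhom _ _ Hxy) as Hn; unfold homogeneous_nodes in Hn; rewrite Hg in Hn;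
    destruct (g y) as [y1 y2 | yb | | ] eqn:Ey; try contradiction;
    eexists; split; (econstructor; eauto) || eauto.
Qed.

Lemma bisim_converse {R} : blind_bisimulation g R -> blind_bisimulation g (fun x y => R y x).
Proof.
  intros [Hhom [Hleft [Hright Hdown]]]; repeat split; eauto.
  intros x y Hxy. specialize (Hhom _ _ Hxy). unfold homogeneous_nodes in *.
  destruct (g x), (g y); auto.
Qed.

Lemma propagation_included {R Q} : blind_bisimulation g R -> (forall x y, Q x y -> R x y) ->
  forall {x y}, propagation g Q x y -> R x y.
Proof. intros [_ [Hleft [Hright Hdown]]] HQ. induction 1; eauto. Qed.

Lemma propagation_parallel {Q n m} :
  Q n m -> forall {s x}, path g n s x -> forall {y}, path g m s y -> propagation g Q x y.
Proof.
  intros HQ s x. induction 1; intros y Hy; inversion Hy; subst.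
  - now constructor.
  - eapply prop_down; eauto.
  - eapply prop_left; eauto.
  - eapply prop_right; eauto.
Qed.

(* If every trace from y can be followed from c and y --q--> c with q non-empty,
   then y has paths of every length: iterate q. *)
Lemma unbounded_paths {y c q} :
  (forall w u, path g y w u -> exists u', path g c w u') -> path g y q c -> q <> [] ->
  forall L, exists w u, path g y w u /\ L <= length w.
Proof.
  intros Hfollow Hq Hne. induction L as [|L [w [u [Hp HL]]]].
  - exists [], y; split; [constructor | simpl; lia].
  - destruct (Hfollow _ _ Hp) as [u' Hu'].
    exists (w ++ q), u'; split; [eapply path_app; eauto |].
    rewrite length_app. destruct q; [contradiction | simpl; lia].
Qed.

Lemma no_bisimilar_descendant {R x y z q} :
  @finite_nodes V -> acyclic g -> blind_bisimulation g R ->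
  R x y -> R x z -> path g y q z -> q <> [] -> False.
Proof.
  intros Hfin Hac HB Hxy Hxz Hq Hne.
  destruct (path_length_bound Hfin Hac) as [B HB_len].
  assert (Hfollow : forall w u, path g y w u -> exists u', path g z w u').
  { intros w u Hp.
    destruct (bisim_transfer (bisim_converse HB) Hp Hxy) as [a [Ha _]].
    destruct (bisim_transfer HB Ha Hxz) as [b [Hb _]]. eauto. }
  destruct (unbounded_paths Hfollow Hq Hne B) as [w [u [Hp HL]]].
  specialize (HB_len _ _ _ Hp). lia.
Qed.

Lemma no_strictly_deeper_partner {R Q : V -> V -> Prop} {n m s x y q z} :
  @finite_nodes V -> acyclic g -> blind_bisimulation g R -> (forall a b, Q a b -> R a b) ->
  Q n m -> path g n s x -> path g m s y -> path g y q z -> q <> [] -> R x z -> False.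
Proof.
  intros Hfin Hac HB HQR HQ Hx Hy Hq Hne Hxz.
  assert (Hxy : R x y)
    by exact (propagation_included HB HQR (propagation_parallel HQ Hx Hy)).
  exact (no_bisimilar_descendant Hfin Hac HB Hxy Hxz Hq Hne).
Qed.

End LambdaGraphPaths.

Theorem mainTheorem8 (A V : Type) (g : V -> node A V) (R Q : V -> V -> Prop)
  (n m l l' : V) (t : trace) :
  lambda_graph g ->
  blind_bisimulation g R ->
  (forall x y, Q x y -> R x y) ->
  Q n m ->
  (exists k, path g n t k) ->
  (exists k, path g m t k) ->
  crosses g n t l -> is_abs g l ->
  crosses g m t l' -> is_abs g l' ->
  R l l' ->
  propagation g Q l l'.
Proof.
  intros [_ [Hfin [Hac _]]] HB HQR HQ [kn Hkn] [km Hkm] Hl _ Hl' _ HR.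
  destruct (crosses_suffix Hl) as [p1 [s1 [E1 H1]]].
  destruct (crosses_suffix Hl') as [p2 [s2 [E2 H2]]].
  destruct (suffix_trichotomy p1 p2 s1 s2 ltac:(congruence)) as [<- | [[q [Hq ->]] | [q [Hq ->]]]].
  -
    exact (propagation_parallel HQ H1 H2).
  -
    rewrite E1 in Hkm. destruct (path_split _ Hkm) as [y [Hy _]].
    destruct (path_split _ H2) as [y' [Hy' Hyl']].
    rewrite (path_det Hy' Hy) in Hyl'.
    exfalso; exact (no_strictly_deeper_partner Hfin Hac HB HQR HQ H1 Hy Hyl' Hq HR).
  - (* l strictly deeper than l': the symmetric case, for the converse relations *)
    rewrite E2 in Hkn. destruct (path_split _ Hkn) as [x [Hx _]].
    destruct (path_split _ H1) as [x' [Hx' Hxl]].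
    rewrite (path_det Hx' Hx) in Hxl.
    exfalso; exact (no_strictly_deeper_partner (Q := fun a b => Q b a) Hfin Hac
                      (bisim_converse HB) (fun a b H => HQR b a H) HQ H2 Hx Hxl Hq HR).
Qed.
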